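(* Let $N\ge2$ and let $W_N=|W_N\rangle\langle W_N|$, where $|W_N\rangle=\frac{1}{\sqrt N}(|10\cdots0\rangle+|01\cdots0\rangle+\cdots+|00\cdots1\rangle)$. Then $C_S(W_N)\ge N-1$.
   Context: $\mathbb{I},\sigma_X,\sigma_Y,\sigma_Z$ are the identity and Pauli matrices. The notation $\sum_\pi \mathbb{I}^{\otimes j}\otimes A^{\otimes (N-j)}$ denotes the sum, over all distinct placements, of tensor products in which exactly $j$ of the $N$ factors are $\mathbb{I}$ and the other $N-j$ are $A$ (each distinct arrangement counted once). Measurement complexity: for an $N$-qubit permutation-invariant operator $\rho$, $C_S(\rho)$ is the minimal $n_A$ such that there exist real $b_i,c_i,d_i$ and real $\alpha_{ij}$ ($1\le i\le n_A$, $0\le j\le N$) with $\rho=\sum_{i=1}^{n_A}\sum_{j=0}^{N}\alpha_{ij}\sum_\pi\mathbb{I}^{\otimes j}\otimes A_i^{\otimes(N-j)}$, $A_i=b_i\sigma_X+c_i\sigma_Y+d_i\sigma_Z$. *)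

From HB Require Import structures.
From mathcomp Require Import all_boot all_order all_algebra all_field.
Set Implicit Arguments. Unset Strict Implicit. Unset Printing Implicit Defensive.
Import Order.TTheory GRing.Theory Num.Theory.
Local Open Scope ring_scope.

(* Computational basis of N qubits: bit strings 'I_N -> bool
   (false = |0>, true = |1>).  An N-qubit operator is given by its matrix
   entries  <x| rho |y>. *)
Definition basis (N : nat) := {ffun 'I_N -> bool}.
Definition qop (N : nat) := basis N -> basis N -> algC.

Definition sI (a b : bool) : algC := if a == b then 1 else 0.
Definition sX (a b : bool) : algC := if a != b then 1 else 0.
Definition sY (a b : bool) : algC :=
  match a, b with
  | false, true => - 'i
  | true, false => 'i
  | _, _ => 0
  end.
Definition sZ (a b : bool) : algC :=
  if a == b then (if a then -1 else 1) else 0.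

Definition pauliA (b c d : algC) (x y : bool) : algC :=
  b * sX x y + c * sY x y + d * sZ x y.

(* sum_pi  I^{(x) j} (x) A^{(x)(N-j)} : sum over all placements, i.e. all
   sets S of j positions carrying the identity, the other positions A. *)
Definition symsum (N j : nat) (A : bool -> bool -> algC) : qop N :=
  fun x y => \sum_(S : {set 'I_N} | #|S| == j)
               \prod_(k < N) (if k \in S then sI (x k) (y k) else A (x k) (y k)).

Definition Wket (N : nat) (x : basis N) : algC :=
  if #|[set k | x k]| == 1%N then (sqrtC N%:R)^-1 else 0.
Definition Wop (N : nat) : qop N := fun x y => @Wket N x * (@Wket N y)^*.
Arguments Wop N : clear implicits.

Definition CS_decomp (N : nat) (rho : qop N) (nA : nat) : Prop :=
  exists (b c d : 'I_nA -> algC) (alpha : 'I_nA -> 'I_N.+1 -> algC),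
    (forall i, b i \is Num.real) /\ (forall i, c i \is Num.real) /\
    (forall i, d i \is Num.real) /\ (forall i j, alpha i j \is Num.real) /\
    forall x y : basis N,
      rho x y = \sum_(i < nA) \sum_(j < N.+1)
                  alpha i j * symsum j (pauliA (b i) (c i) (d i)) x y.

From HB Require Import structures.
From mathcomp Require Import all_boot all_order all_algebra all_field.
From mathcomp Require Import ring.
Set Implicit Arguments. Unset Strict Implicit. Unset Printing Implicit Defensive.
Import Order.TTheory GRing.Theory Num.Theory.
Local Open Scope ring_scope.

(* Pair an N-qubit operator rho with a product functional
     <rho, C> = \sum_(x, y) rho x y * \prod_k C_k (x k) (y k),
   where each C_k is a single-qubit 2x2 array.  On a symmetrised term
   symsum j A this pairing factorises over the sites, so it vanishes as
   soon as one site k0 has C_k0 orthogonal to both I and A ("C_k0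
   annihilates A").  Given a decomposition of W_N with n_A <= N - 2 terms
   A_i = b_i X + c_i Y + d_i Z, we build a product functional in which every
   A_i is annihilated at some site: the last site carries the matrix unit
   E_01, which kills every diagonal A_i (b_i - i c_i = 0), and every other
   A_i gets a private site among the first N - 2.  The pairing with W_N,
   however, only sees the single entry <e_(N-2)| W_N |e_(N-1)> between
   one-excitation states, and is nonzero. *)

Definition pair1 (A C : bool -> bool -> algC) : algC :=
  \sum_u \sum_v A u v * C u v.

Definition annihilates (A C : bool -> bool -> algC) : Prop :=
  pair1 sI C = 0 /\ pair1 A C = 0.

Definition pairing (N : nat) (C : 'I_N -> bool -> bool -> algC) (rho : qop N) : algC :=
  \sum_(x : basis N) \sum_(y : basis N) rho x y * \prod_(k < N) C k (x k) (y k).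

Lemma eq_pairing N (C : 'I_N -> bool -> bool -> algC) (rho sigma : qop N) :
  (forall x y, rho x y = sigma x y) -> pairing C rho = pairing C sigma.
Proof. by move=> eq_rho; apply: eq_bigr => x _; apply: eq_bigr => y _; rewrite eq_rho. Qed.

Lemma pairing_sum N (C : 'I_N -> bool -> bool -> algC) (I : finType) (F : I -> qop N) :
  pairing C (fun x y => \sum_t F t x y) = \sum_t pairing C (F t).
Proof.
rewrite /pairing.
under eq_bigr => x _ do under eq_bigr => y _ do rewrite big_distrl.
under eq_bigr => x _ do rewrite exchange_big.
by rewrite exchange_big.
Qed.

Lemma pairing_scale N (C : 'I_N -> bool -> bool -> algC) (a : algC) (rho : qop N) :
  pairing C (fun x y => a * rho x y) = a * pairing C rho.
Proof.
rewrite /pairing big_distrr; apply: eq_bigr => x _ /=.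
by rewrite big_distrr; apply: eq_bigr => y _ /=; rewrite mulrA.
Qed.

Lemma sum_basis_prod N (G : 'I_N -> bool -> bool -> algC) :
  \sum_(x : basis N) \sum_(y : basis N) \prod_(k < N) G k (x k) (y k) =
  \prod_(k < N) \sum_u \sum_v G k u v.
Proof.
rewrite bigA_distr_bigA /=; apply: eq_bigr => x _.
by rewrite bigA_distr_bigA.
Qed.

Lemma pairing_symsum N (C : 'I_N -> bool -> bool -> algC) j A :
  pairing C (symsum j A) =
  \sum_(S : {set 'I_N} | #|S| == j) \prod_(k < N) pair1 (if k \in S then sI else A) (C k).
Proof.
rewrite /pairing /symsum.
under eq_bigr => x _ do under eq_bigr => y _ do rewrite big_distrl.
under eq_bigr => x _ do rewrite exchange_big.
rewrite exchange_big; apply: eq_bigr => S _ /=.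
rewrite -sum_basis_prod; apply: eq_bigr => x _; apply: eq_bigr => y _.
by rewrite -big_split; apply: eq_bigr => k _; case: (k \in S).
Qed.

Lemma pairing_symsum_eq0 N (C : 'I_N -> bool -> bool -> algC) k0 j A :
  annihilates A (C k0) -> pairing C (symsum j A) = 0.
Proof.
move=> [killI killA]; rewrite pairing_symsum big1 // => S _.
by rewrite (bigD1 k0) //=; case: (k0 \in S); rewrite ?killI ?killA mul0r.
Qed.

Lemma pairing_decomp_eq0 N n (C : 'I_N -> bool -> bool -> algC)
    (A : 'I_n -> bool -> bool -> algC) (alpha : 'I_n -> 'I_N.+1 -> algC) (rho : qop N) :
  (forall i, exists k, annihilates (A i) (C k)) ->
  (forall x y, rho x y = \sum_(i < n) \sum_(j < N.+1) alpha i j * symsum j (A i) x y) ->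
  pairing C rho = 0.
Proof.
move=> kill decomp; rewrite (eq_pairing _ decomp) pairing_sum big1 // => i _.
rewrite pairing_sum big1 // => j _; have [k killk] := kill i.
by rewrite pairing_scale (pairing_symsum_eq0 _ killk) mulr0.
Qed.

Lemma sum2_single (T : finType) (f : T -> T -> algC) (x0 y0 : T) :
  (forall x y, f x y != 0 -> x = x0 /\ y = y0) -> \sum_x \sum_y f x y = f x0 y0.
Proof.
move=> support; rewrite (bigD1 x0) //= (bigD1 y0) //= big1 ?addr0 => [|y yy0].
  rewrite big1 ?addr0 // => x xx0; apply: big1 => y _; apply/eqP.
  by apply: contraNT xx0 => /support [-> _].
by apply/eqP; apply: contraNT yy0 => /support [_ ->].
Qed.

Definition excitation N (s : 'I_N) : basis N := [ffun k => k == s].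

Lemma excitationE N (s k : 'I_N) : excitation s k = (k == s).
Proof. exact: ffunE. Qed.

Lemma Wket_excitation N (s : 'I_N) : Wket (excitation s) != 0.
Proof.
rewrite /Wket (_ : [set k | excitation s k] = [set s]); last first.
  by apply/setP => k; rewrite !inE excitationE.
rewrite cards1 eqxx invr_eq0 sqrtC_eq0 pnatr_eq0 -lt0n.
exact: leq_ltn_trans (leq0n s) (ltn_ord s).
Qed.

Lemma Wket_support N (x : basis N) : Wket x != 0 -> exists s, x = excitation s.
Proof.
rewrite /Wket; case: ifP => [/cards1P [s xs] _ | _]; last by rewrite eqxx.
exists s; apply/ffunP => k; move/setP: xs => /(_ k).
by rewrite !inE excitationE.
Qed.

(* A product functional seeing W_N through exactly one matrix entry: C_s1 is
   supported on the entry (0,1), and every other site except s2 vanishes at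
   the entry (1,0); then only the pair (e_s2, e_s1) contributes. *)
Lemma pairing_Wop_neq0 N (C : 'I_N -> bool -> bool -> algC) (s1 s2 : 'I_N) :
  s1 != s2 ->
  (forall u v, C s1 u v != 0 -> ~~ u && v) ->
  (forall k u, k != s1 -> k != s2 -> C k u false != 0 -> ~~ u) ->
  \prod_(k < N) C k (excitation s2 k) (excitation s1 k) != 0 ->
  pairing C (Wop N) != 0.
Proof.
move=> s12 C_s1 C_k C_target.
pose P x y := \prod_(k < N) C k (x k) (y k).
have only_target x y : Wop N x y * P x y != 0 -> x = excitation s2 /\ y = excitation s1.
  rewrite mulf_eq0 negb_or /Wop mulf_eq0 negb_or conjC_eq0 => /andP [/andP [Wx Wy] Pxy].
  have [[a xa] [b yb]] := (Wket_support Wx, Wket_support Wy); subst x y.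
  have C_nz k : C k (excitation a k) (excitation b k) != 0.
    by apply: contraNneq Pxy => Ck0; rewrite /P (bigD1 k) //= Ck0 mul0r.
  move: (C_s1 _ _ (C_nz s1)); rewrite !excitationE => /andP [s1a /eqP s1b]; subst b.
  have as1 : a != s1 by rewrite eq_sym.
  have Ca := C_nz a; rewrite !excitationE eqxx (negbTE as1) in Ca.
  have /eqP -> : a == s2 by apply: contraT => as2; have := C_k _ _ as1 as2 Ca.
  by [].
rewrite /pairing (sum2_single only_target) mulf_neq0 //.
by rewrite mulf_neq0 ?conjC_eq0 // Wket_excitation.
Qed.

Definition unit01 (u v : bool) : algC := (~~ u && v)%:R.
Definition unit00 (u v : bool) : algC := (~~ u && ~~ v)%:R.
Definition col0 (u v : bool) : algC := (~~ v)%:R.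
Definition tilt (r : algC) (u v : bool) : algC :=
  if u then (if v then -1 else 0) else (if v then r else 1).

(* E_01 picks the off-diagonal entry b - i c of A. *)
Lemma annihilates_unit01 b c d :
  b - 'i * c = 0 -> annihilates (pauliA b c d) unit01.
Proof.
move=> offdiag0; rewrite /annihilates /pair1 !big_bool /= /sI /pauliA /sX /sY /sZ /unit01 /=.
by split; [ring | rewrite -[RHS]offdiag0; ring].
Qed.

Lemma annihilates_tilt b c d :
  b - 'i * c != 0 -> annihilates (pauliA b c d) (tilt (- (d *+ 2) / (b - 'i * c))).
Proof.
move=> offdiag_nz; rewrite /annihilates /pair1 !big_bool /= /sI /pauliA /sX /sY /sZ /tilt /=.
by split; [ring | field].
Qed.

Section Witness.

Variables (n nA : nat) (b c d : 'I_nA -> algC).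

Let s2 : 'I_n.+2 := inord n.

Lemma ord_max_neq_s2 : ord_max != s2.
Proof. by rewrite -val_eqE /= inordK // eqn_leq ltnn. Qed.

Definition witness (k : 'I_n.+2) : bool -> bool -> algC :=
  if k == ord_max then unit01
  else if k == s2 then col0
  else if (insub (val k) : option 'I_nA) is Some i then
         if b i - 'i * c i != 0 then tilt (- (d i *+ 2) / (b i - 'i * c i))
         else unit00
       else unit00.

Lemma witness_annihilates : (nA <= n)%N ->
  forall i, exists k, annihilates (pauliA (b i) (c i) (d i)) (witness k).
Proof.
move=> le_nA_n i; case: (eqVneq (b i - 'i * c i) 0) => [offdiag0 | offdiag_nz].
  by exists ord_max; rewrite /witness eqxx; exact: annihilates_unit01.
have lt_i_n : (i < n)%N := leq_trans (ltn_ord i) le_nA_n.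
pose k : 'I_n.+2 := widen_ord (leq_trans le_nA_n (leqW (leqnSn n))) i.
have k_max : (k == ord_max) = false by rewrite -val_eqE ltn_eqF // ltnW.
have k_s2 : (k == s2) = false by rewrite -val_eqE /= inordK // ltn_eqF.
exists k; rewrite /witness k_max k_s2 valK offdiag_nz.
exact: annihilates_tilt.
Qed.

Lemma witness_pairing_Wop : pairing witness (Wop n.+2) != 0.
Proof.
apply: (pairing_Wop_neq0 ord_max_neq_s2).
- by move=> u v; rewrite /witness eqxx /unit01; case: (~~ u && v); rewrite ?eqxx.
- move=> k u k_max k_s2; rewrite /witness (negbTE k_max) (negbTE k_s2).
  by case: (insub _) => [i|]; [case: ifP => _|]; case: u; rewrite /tilt /unit00 ?eqxx.
- rewrite big1 ?oner_eq0 // => k _; rewrite !excitationE /witness.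
  case: (eqVneq k ord_max) => [-> | k_max]; first by rewrite (negbTE ord_max_neq_s2).
  case: (eqVneq k s2) => [_ | _]; first by [].
  by case: (insub _) => [i|]; [case: ifP|].
Qed.

End Witness.

Theorem corollary2 (N : nat) (hN : (2 <= N)%N) (nA : nat) :
  CS_decomp (Wop N) nA -> (N.-1 <= nA)%N.
Proof.
case: N hN => [|[|n]] // _ [b [c [d [alpha [_ [_ [_ [_ decomp]]]]]]]].
rewrite leqNgt; apply/negP => /= le_nA_n.
have := witness_pairing_Wop n b c d.
by rewrite (pairing_decomp_eq0 (witness_annihilates b c d le_nA_n) decomp) eqxx.
Qed.
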